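(* In qubit quantum theory, let $M=\hat n\cdot\vec\sigma$ and $M'=\hat n'\cdot\vec\sigma$ be the $\pm1$-valued projective measurements along unit Bloch vectors $\hat n,\hat n'\in\mathbb{R}^3$, where $\vec\sigma=(\sigma_x,\sigma_y,\sigma_z)$ are the Pauli matrices. Then every qubit state (density operator) satisfies the $A_1^2$-orbit-realizability condition relative to $M$ and $M'$ if and only if $\hat n\cdot\hat n'=0$.
   Context: For a qubit density operator $\rho$ and a $\pm1$-valued observable $M$, $\langle M\rangle_\rho=\mathrm{tr}(M\rho)$. A state $\rho_1$ satisfies the $A_1^2$-orbit-realizability condition relative to $M,M'$ if there exist qubit density operators $\rho_2,\rho_3,\rho_4$ with $\langle M\rangle_{\rho_1}=\langle M\rangle_{\rho_2}=-\langle M\rangle_{\rho_3}=-\langle M\rangle_{\rho_4}$, $\langle M'\rangle_{\rho_1}=-\langle M'\rangle_{\rho_2}=-\langle M'\rangle_{\rho_3}=\langle M'\rangle_{\rho_4}$, and $\tfrac12\rho_1+\tfrac12\rho_3=\tfrac12\rho_2+\tfrac12\rho_4$. *)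

From HB Require Import structures.
From mathcomp Require Import all_boot all_order all_algebra.
From mathcomp Require Import complex.
Set Implicit Arguments. Unset Strict Implicit. Unset Printing Implicit Defensive.
Import Order.TTheory GRing.Theory Num.Theory.
Local Open Scope ring_scope.
Local Open Scope complex_scope.

Section Qubit.
Variable R : rcfType.
Local Notation C := R[i].

Definition adj m n (A : 'M[C]_(m, n)) : 'M[C]_(n, m) := (map_mx (@conjc R) A)^T.

Definition sigma_x : 'M[C]_2 :=
  \matrix_(i < 2, j < 2) (if i == j then 0 else 1).
Definition sigma_y : 'M[C]_2 :=
  \matrix_(i < 2, j < 2)
    (if i == j then 0 else if (i == 0 :> nat) then - 'i else 'i).
Definition sigma_z : 'M[C]_2 :=
  \matrix_(i < 2, j < 2)
    (if i == j then (if (i == 0 :> nat) then 1 else -1) else 0).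

Definition dot3 (n m : 'rV[R]_3) : R := \sum_(k < 3) n 0 k * m 0 k.
Definition unit_vec (n : 'rV[R]_3) : Prop := dot3 n n = 1.

Definition pauli_obs (n : 'rV[R]_3) : 'M[C]_2 :=
  (n 0 0)%:C *: sigma_x + (n 0 1)%:C *: sigma_y + (n 0 2%:R)%:C *: sigma_z.

Definition density (rho : 'M[C]_2) : Prop :=
  [/\ adj rho = rho,
      (forall v : 'cV[C]_2, 0 <= ((adj v) *m rho *m v) 0 0)
    & \tr rho = 1].

Definition expect (M rho : 'M[C]_2) : C := \tr (M *m rho).

Definition A12_realizable (M M' rho1 : 'M[C]_2) : Prop :=
  exists rho2 rho3 rho4 : 'M[C]_2,
    density rho2 /\ density rho3 /\ density rho4 /\
    (expect M rho1 = expect M rho2 /\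
     expect M rho2 = - expect M rho3 /\
     - expect M rho3 = - expect M rho4) /\
    (expect M' rho1 = - expect M' rho2 /\
     - expect M' rho2 = - expect M' rho3 /\
     - expect M' rho3 = expect M' rho4) /\
    (1/2%:R) *: rho1 + (1/2%:R) *: rho3 = (1/2%:R) *: rho2 + (1/2%:R) *: rho4.

End Qubit.

(* Every qubit state is a Bloch state rho_r = (1 + r.sigma)/2 with |r| <= 1,
   and <n.sigma>_(rho_r) = n.r.  If n and n' are orthogonal, reflecting r in
   the planes orthogonal to n' and to n, and composing the two reflections,
   gives Bloch vectors r2, r4, r3 with exactly the required signs of n.r and
   n'.r; as the reflection in n moves a vector by a multiple of n and does not
   change n.(r2), we get r + r3 = r2 + r4, which is the mixture identity.
   Conversely, for the pure state r = n the state rho2 has n.r2 = 1, which in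
   the unit ball forces r2 = n; then <n'.sigma> takes opposite values on the
   same state, so n.n' = 0. *)

From HB Require Import structures.
From mathcomp Require Import all_boot all_order all_algebra.
From mathcomp Require Import complex ring lra.
Set Implicit Arguments.
Unset Strict Implicit.
Unset Printing Implicit Defensive.

Import Order.TTheory GRing.Theory Num.Theory.
Local Open Scope ring_scope.
Local Open Scope complex_scope.

Lemma ord2P (i : 'I_2) : i = 0 \/ i = 1.
Proof. by case: i => [[|[|//]] Hi]; [left | right]; apply/val_inj. Qed.

Lemma matrix2P (T : Type) (A B : 'M[T]_2) :
  A 0 0 = B 0 0 -> A 0 1 = B 0 1 -> A 1 0 = B 1 0 -> A 1 1 = B 1 1 -> A = B.
Proof.
by move=> E00 E01 E10 E11; apply/matrixP => i j;
  case: (ord2P i) => ->; case: (ord2P j) => ->.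
Qed.

Lemma mulmx2E (T : pzSemiRingType) m p (A : 'M[T]_(m, 2)) (B : 'M[T]_(2, p)) i j :
  (A *m B) i j = A i 0 * B 0 j + A i 1 * B 1 j.
Proof.
rewrite mxE !big_ord_recl big_ord0 addr0.
by have -> : lift ord0 ord0 = 1 :> 'I_2 by apply/val_inj.
Qed.

Lemma mxtrace2E (T : pzSemiRingType) (A : 'M[T]_2) : \tr A = A 0 0 + A 1 1.
Proof.
rewrite /mxtrace !big_ord_recl big_ord0 addr0.
by have -> : lift ord0 ord0 = 1 :> 'I_2 by apply/val_inj.
Qed.

Section Dot3.
Variable R : rcfType.
Implicit Types (n m r s : 'rV[R]_3).

Lemma dot3E n m : dot3 n m = n 0 0 * m 0 0 + n 0 1 * m 0 1 + n 0 2%:R * m 0 2%:R.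
Proof.
rewrite /dot3 !big_ord_recl big_ord0 addr0 addrA.
have -> : lift ord0 ord0 = 1 :> 'I_3 by apply/val_inj.
by have -> : lift ord0 (lift ord0 ord0) = 2%:R :> 'I_3 by apply/val_inj.
Qed.

Lemma dot3C n m : dot3 n m = dot3 m n.
Proof. by apply: eq_bigr => k _; rewrite mulrC. Qed.

Lemma dot3_ge0 r : 0 <= dot3 r r.
Proof. by apply: sumr_ge0 => k _; rewrite -expr2 sqr_ge0. Qed.

Lemma dot3_eq0 r : dot3 r r = 0 -> r = 0.
Proof.
move=> /eqP; rewrite psumr_eq0 => [/allP r0|k _]; last by rewrite -expr2 sqr_ge0.
apply/rowP => k; rewrite mxE; apply/eqP.
by rewrite -sqrf_eq0 expr2; apply: r0; rewrite mem_index_enum.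
Qed.

Lemma eq_of_dot3_unit n s :
  unit_vec n -> dot3 s s <= 1 -> dot3 n s = 1 -> s = n.
Proof.
move=> n1 s1 ns1; apply/eqP; rewrite -subr_eq0; apply/eqP/dot3_eq0.
apply/eqP; rewrite eq_le dot3_ge0 andbT.
have -> : dot3 (s - n) (s - n) = dot3 s s - 2%:R * dot3 n s + dot3 n n.
  by rewrite !dot3E !mxE; ring.
by rewrite ns1 n1; lra.
Qed.

Definition householder m r := r - (2%:R * dot3 m r) *: m.

Lemma dot3_householder n m r :
  dot3 n (householder m r) = dot3 n r - 2%:R * dot3 m r * dot3 n m.
Proof. by rewrite /householder !dot3E !mxE; ring. Qed.

Lemma dot3_householderK m r :
  unit_vec m -> dot3 m (householder m r) = - dot3 m r.
Proof. by move=> m1; rewrite dot3_householder m1; ring. Qed.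

Lemma dot3_householder_orth n m r :
  dot3 n m = 0 -> dot3 n (householder m r) = dot3 n r.
Proof. by move=> nm; rewrite dot3_householder nm mulr0 subr0. Qed.

Lemma householder_isometry m r :
  unit_vec m -> dot3 (householder m r) (householder m r) = dot3 r r.
Proof.
move=> m1; rewrite dot3_householder.
rewrite [dot3 _ r]dot3C [dot3 _ m]dot3C dot3_householderK // dot3_householder.
by rewrite [dot3 r m]dot3C; ring.
Qed.

Lemma householder_comp_orth n m r : dot3 n m = 0 ->
  r + householder n (householder m r) = householder m r + householder n r.
Proof.
move=> nm; rewrite [householder n (householder m r)]/householder.
by rewrite dot3_householder_orth // addrCA.
Qed.

End Dot3.

(* Locked: when rewriting, Rocq otherwise unfolds and compares whole matrices
   to tell two Bloch states apart, which is prohibitively slow. *)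
HB.lock Definition bloch (R : rcfType) (r : 'rV[R]_3) : 'M[R[i]]_2 :=
  2%:R^-1 *: (1%:M + pauli_obs r).
Arguments bloch {R}.

Section Qubit.
Variable R : rcfType.
Local Notation C := R[i].
Implicit Types (n r s : 'rV[R]_3) (rho : 'M[C]_2).

Lemma pauli_obsD r s : pauli_obs (r + s) = pauli_obs r + pauli_obs s.
Proof.
rewrite /pauli_obs !mxE !rmorphD !scalerDl.
by rewrite [X in X + _ = _]addrACA [LHS]addrACA.
Qed.

Lemma pauli_obsE r : pauli_obs r = \matrix_(i, j)
  if i == j then (if i == 0 then (r 0 2%:R)%:C else (- r 0 2%:R)%:C)
  else if i == 0 then r 0 0 -i* r 0 1 else r 0 0 +i* r 0 1.
Proof. by apply/matrix2P; rewrite !mxE /=; simpc. Qed.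

Lemma tr_pauli_obs r : \tr (pauli_obs r) = 0.
Proof. by rewrite pauli_obsE mxtrace2E !mxE /= -rmorphD subrr. Qed.

Lemma tr_pauli_obs_mul n r :
  \tr (pauli_obs n *m pauli_obs r) = (2%:R * dot3 n r)%:C.
Proof.
rewrite !pauli_obsE mxtrace2E !mulmx2E !mxE /= dot3E -complexr0; simpc.
by congr (_ +i* _); ring.
Qed.


Lemma expect_bloch n r : expect (pauli_obs n) (bloch r) = (dot3 n r)%:C.
Proof.
rewrite /expect bloch.unlock -scalemxAr mulmxDr mulmx1 linearZ linearD /=.
rewrite tr_pauli_obs tr_pauli_obs_mul add0r rmorphM rmorph_nat /=.
by rewrite mulKf // pnatr_eq0.
Qed.

Lemma bloch_addE r s :
  bloch r + bloch s = 2%:R^-1 *: (1%:M + 1%:M + pauli_obs (r + s)).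
Proof. by rewrite bloch.unlock -scalerDr [in LHS]addrACA pauli_obsD. Qed.

Lemma blochD r s r' s' :
  r + s = r' + s' -> bloch r + bloch s = bloch r' + bloch s'.
Proof. by move=> rs; rewrite !bloch_addE rs. Qed.

Lemma blochE r : bloch r = \matrix_(i, j)
  if i == j then
    (if i == 0 then ((1 + r 0 2%:R) / 2%:R)%:C else ((1 - r 0 2%:R) / 2%:R)%:C)
  else if i == 0 then (r 0 0 / 2%:R) -i* (r 0 1 / 2%:R)
  else (r 0 0 / 2%:R) +i* (r 0 1 / 2%:R).
Proof.
have inv2C : 2%:R^-1 = (2%:R^-1)%:C :> C by rewrite fmorphV rmorph_nat.
rewrite bloch.unlock pauli_obsE inv2C; apply/matrix2P; rewrite !mxE /= -?complexr0; simpc.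
all: by congr (_ +i* _); ring.
Qed.

Lemma hermitian_form2E (A : 'M[C]_2) (v : 'cV[C]_2) :
  (adj v *m A *m v) 0 0 = (v 0 0)^* * (A 0 0 * v 0 0 + A 0 1 * v 1 0)
                          + (v 1 0)^* * (A 1 0 * v 0 0 + A 1 1 * v 1 0).
Proof. by rewrite !mulmx2E /adj !mxE; ring. Qed.

Lemma density_bloch r : dot3 r r <= 1 -> density (bloch r).
Proof.
rewrite dot3E => r1; split.
- by apply/matrix2P; rewrite /adj blochE !mxE /=; simpc.
- move=> v; rewrite hermitian_form2E blochE !mxE /=.
  case: (v 0 0) => [a1 a2]; case: (v 1 0) => [b1 b2]; simpc.
  set x := r 0 0 in r1 *; set y := r 0 1 in r1 *; set z := r 0 2%:R in r1 *.
  apply/andP; split; first by apply/eqP; ring.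
  have D_ge0 : 0 <= (1 - (x * x + y * y + z * z)) / 4%:R.
    by rewrite divr_ge0 ?subr_ge0 ?ler0n.
  (* With p, q = (1 +- z)/2 and c = (x - iy)/2 the form is
     |p a + c b|^2 + |q b + c^* a|^2 + (p q - |c|^2)(|a|^2 + |b|^2),
     because p + q = 1. *)
  rewrite [leRHS](_ : _ =
      ((1 + z) / 2%:R * a1 + x / 2%:R * b1 + y / 2%:R * b2) ^+ 2
    + ((1 + z) / 2%:R * a2 + x / 2%:R * b2 - y / 2%:R * b1) ^+ 2
    + ((1 - z) / 2%:R * b1 + x / 2%:R * a1 - y / 2%:R * a2) ^+ 2
    + ((1 - z) / 2%:R * b2 + x / 2%:R * a2 + y / 2%:R * a1) ^+ 2
    + (1 - (x * x + y * y + z * z)) / 4%:R * (a1 ^+ 2 + a2 ^+ 2 + b1 ^+ 2 + b2 ^+ 2)).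
    by rewrite !addr_ge0 ?sqr_ge0 // mulr_ge0 // !addr_ge0 ?sqr_ge0.
  by field.
- rewrite bloch.unlock linearZ linearD /= mxtrace1 tr_pauli_obs addr0 /=.
  by rewrite mulVf // pnatr_eq0.
Qed.

Lemma density_blochP rho :
  density rho -> exists2 r, dot3 r r <= 1 & rho = bloch r.
Proof.
case=> herm psd tr1.
have conj_entry i j : rho i j = (rho j i)^* by rewrite -{1}herm /adj !mxE.
move E00: (rho 0 0) => [p p']; move E11: (rho 1 1) => [q q'].
move E01: (rho 0 1) => [u w].
have E10 : rho 1 0 = u -i* w by rewrite conj_entry E01.
have := conj_entry 0 0; rewrite E00 => -[p'N].
have := conj_entry 1 1; rewrite E11 => -[q'N].
have {p'N} p'0 : p' = 0 by lra.
have {q'N} q'0 : q' = 0 by lra.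
subst p' q'.
have pq1 : p + q = 1 by move: tr1; rewrite mxtrace2E E00 E11 => -[].
pose D := p * q - u ^+ 2 - w ^+ 2.
(* D = det rho; positivity on the vectors (c, -p) and (-q, c^* ), where
   c = rho 0 1, reads p D >= 0 and q D >= 0. *)
have pD : 0 <= p * D.
  have := psd (\col_i [:: u +i* w; - (p +i* 0)]`_i).
  rewrite hermitian_form2E !mxE /= E00 E01 E10 E11; simpc => /andP[_].
  rewrite /D; lra.
have qD : 0 <= q * D.
  have := psd (\col_i [:: - (q +i* 0); u -i* w]`_i).
  rewrite hermitian_form2E !mxE /= E00 E01 E10 E11; simpc => /andP[_].
  rewrite /D; lra.
have D_ge0 : 0 <= D by rewrite -[D]mul1r -pq1 mulrDl addr_ge0.
exists (\row_k [:: 2%:R * u; - (2%:R * w); p - q]`_k).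
  rewrite dot3E !mxE /=.
  rewrite /D in D_ge0; nra.
apply/matrix2P; rewrite blochE !mxE /= ?(E00, E01, E10, E11) -?complexr0; simpc.
all: by congr (_ +i* _); lra.
Qed.

(* Stated for arbitrary observables M, M' with the Bloch expectations of n.sigma
   and n'.sigma: rewriting then never compares two unfolded [pauli_obs n]. *)
Lemma A12_realizable_bloch (M M' : 'M[C]_2) n n' r1 r2 r3 r4 :
  (forall r, expect M (bloch r) = (dot3 n r)%:C) ->
  (forall r, expect M' (bloch r) = (dot3 n' r)%:C) ->
  dot3 r2 r2 <= 1 -> dot3 r3 r3 <= 1 -> dot3 r4 r4 <= 1 ->
  dot3 n r2 = dot3 n r1 -> dot3 n r3 = - dot3 n r1 -> dot3 n r4 = - dot3 n r1 ->
  dot3 n' r2 = - dot3 n' r1 -> dot3 n' r3 = - dot3 n' r1 ->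
  dot3 n' r4 = dot3 n' r1 -> r1 + r3 = r2 + r4 ->
  A12_realizable M M' (bloch r1).
Proof.
move=> eM eM' r2_1 r3_1 r4_1 E2 E3 E4 E2' E3' E4' r13.
exists (bloch r2), (bloch r3), (bloch r4).
do 3 (split; first exact: density_bloch).
rewrite !eM !eM' E2 E3 E4 E2' E3' E4' !rmorphN !opprK.
by do 2 (split; first by do 2 split); rewrite -!scalerDr (blochD r13).
Qed.

Lemma A12_realizable_orth n n' r :
  unit_vec n -> unit_vec n' -> dot3 n n' = 0 -> dot3 r r <= 1 ->
  A12_realizable (pauli_obs n) (pauli_obs n') (bloch r).
Proof.
move=> n1 n'1 nn' r1; have n'n : dot3 n' n = 0 by rewrite dot3C.
apply: (A12_realizable_bloch (expect_bloch n) (expect_bloch n')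
  (r2 := householder n' r)
  (r3 := householder n (householder n' r)) (r4 := householder n r)).
- by rewrite householder_isometry.
- by rewrite !householder_isometry.
- by rewrite householder_isometry.
- exact: dot3_householder_orth.
- by rewrite dot3_householderK // dot3_householder_orth.
- exact: dot3_householderK.
- exact: dot3_householderK.
- by rewrite dot3_householder_orth // dot3_householderK.
- exact: dot3_householder_orth.
- exact: householder_comp_orth.
Qed.

Lemma A12_realizable_pure_orth n n' :
  unit_vec n -> A12_realizable (pauli_obs n) (pauli_obs n') (bloch n) ->
  dot3 n n' = 0.
Proof.
move=> n1 [rho2 [_ [_ [D2 [_ [_ [[EM _] [[EM' _] _]]]]]]]].
have [s s1 rho2E] := density_blochP D2.
move: EM EM'; rewrite rho2E !expect_bloch n1 -rmorphN => /complexI ns /complexI.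
rewrite -(eq_of_dot3_unit n1 s1 (esym ns)) dot3C => /eqP.
by rewrite -subr_eq0 opprK -mulr2n mulrn_eq0 /= => /eqP.
Qed.

End Qubit.

Theorem mainTheorem3 (R : rcfType) (n n' : 'rV[R]_3) :
  unit_vec n -> unit_vec n' ->
  ((forall rho : 'M[R[i]]_2, density rho ->
      A12_realizable (pauli_obs n) (pauli_obs n') rho)
   <-> dot3 n n' = 0).
Proof.
move=> n1 n'1; split=> [realizable | nn' rho /density_blochP [r r1 ->]].
  by apply: (A12_realizable_pure_orth n1); apply/realizable/density_bloch; rewrite n1.
exact: A12_realizable_orth.
Qed.
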